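(* Let $\rho$ be a density operator on a $d$-dimensional complex Hilbert space $\mathbb{H}$, and let $\{\ket{a_l}\}_{l=1}^d$ and $\{\ket{f_p}\}_{p=1}^d$ be two orthonormal bases of $\mathbb{H}$. Define the KD distribution $Q_{lp} = \langle f_p|a_l\rangle\langle a_l|\rho|f_p\rangle$ and the KD moments $q_n = \sum_{l,p} (Q_{lp})^n$ for positive integers $n$. Suppose the KD distribution is positive, i.e. $Q_{lp}$ is real and nonnegative for all $l,p$. Then for every positive integer $m$, the $(m+1)\times(m+1)$ Hankel matrix $H_m(\mathbf{q})$ with entries $[H_m(\mathbf{q})]_{ij} = q_{i+j+1}$ for $i,j\in\{0,1,\dots,m\}$ (built from $\mathbf{q} = (q_1,\dots,q_{2m+1})$) satisfies $\det[H_m(\mathbf{q})] \ge 0$.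
   Context: ''Positive'' means all entries of the KD distribution are real and nonnegative. *)

From HB Require Import structures.
From mathcomp Require Import all_boot all_order all_algebra.
Set Implicit Arguments. Unset Strict Implicit. Unset Printing Implicit Defensive.
Import Order.TTheory GRing.Theory Num.Theory.
Local Open Scope ring_scope.

(* The Hilbert space C^d: column vectors 'cV[C]_d over a numClosedFieldType C
   (e.g. the complex numbers), with the standard inner product. *)

Definition adj {C : numClosedFieldType} {m n} (M : 'M[C]_(m, n)) : 'M[C]_(n, m) :=
  map_mx Num.conj (M^T).

Definition braket {C : numClosedFieldType} {d} (u v : 'cV[C]_d) : C :=
  (adj u *m v) ord0 ord0.

Definition sandwich {C : numClosedFieldType} {d} (u : 'cV[C]_d) (M : 'M[C]_d)
  (v : 'cV[C]_d) : C := (adj u *m M *m v) ord0 ord0.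

Definition orthonormal_basis {C : numClosedFieldType} {d} (a : 'I_d -> 'cV[C]_d) :=
  forall i j : 'I_d, braket (a i) (a j) = (i == j)%:R.

Definition density_operator {C : numClosedFieldType} {d} (rho : 'M[C]_d) :=
  [/\ adj rho = rho,
      (forall v : 'cV[C]_d, 0 <= sandwich v rho v) &
      \tr rho = 1].

Definition KD {C : numClosedFieldType} {d} (rho : 'M[C]_d)
  (a f : 'I_d -> 'cV[C]_d) (l p : 'I_d) : C :=
  braket (f p) (a l) * sandwich (a l) rho (f p).

Definition KD_moment {C : numClosedFieldType} {d} (rho : 'M[C]_d)
  (a f : 'I_d -> 'cV[C]_d) (n : nat) : C :=
  \sum_(l < d) \sum_(p < d) (KD rho a f l p) ^+ n.

Definition KD_positive {C : numClosedFieldType} {d} (rho : 'M[C]_d)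
  (a f : 'I_d -> 'cV[C]_d) :=
  forall l p : 'I_d, KD rho a f l p \is Num.real /\ 0 <= KD rho a f l p.

Definition hankel {C : numClosedFieldType} (q : nat -> C) (m : nat) : 'M[C]_m.+1 :=
  \matrix_(i < m.+1, j < m.+1) q (i + j + 1)%N.

From mathcomp Require Import all_boot all_order all_fingroup all_algebra.
Set Implicit Arguments. Unset Strict Implicit. Unset Printing Implicit Defensive.
Import Order.TTheory GRing.Theory Num.Theory.
Local Open Scope ring_scope.

(* The moments q_k = \sum_t x_t^k of finitely many numbers x_t >= 0 are those of the
   discrete measure with weight x_t at the node x_t.  For weights w_t >= 0 and real
   nodes x_t, the Hankel determinant of the moments \sum_t w_t x_t^(i+j) expands
   multilinearly into \sum_g (\prod_i w_(g i) x_(g i)^i) det V_g over all maps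
   g : 'I_n -> T, where V_g is the Vandermonde matrix of the nodes x_(g i).
   Averaging over the permutations s of 'I_n, which act on g by precomposition
   and multiply det V_g by the sign of s, turns this into
   n! det H = \sum_g (\prod_i w_(g i)) (det V_g)^2 >= 0. *)

Section MomentHankel.
Variables (R : numDomainType) (T : finType) (w x : T -> R) (n : nat).
Hypotheses (w_ge0 : forall t, 0 <= w t) (x_real : forall t, x t \is Num.real).

Definition moment_hankel : 'M[R]_n := \matrix_(i, j) \sum_t w t * x t ^+ (i + j).

Definition node_vandermonde (g : {ffun 'I_n -> T}) : 'M[R]_n :=
  Vandermonde n (\row_j x (g j)).

Definition moment_weight (g : {ffun 'I_n -> T}) : R := \prod_i (w (g i) * x (g i) ^+ i).

Definition ffun_perm (s : 'S_n) (g : {ffun 'I_n -> T}) : {ffun 'I_n -> T} :=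
  [ffun i => g (s i)].

Lemma ffun_perm_inj s : injective (ffun_perm s).
Proof.
move=> g h /ffunP eq_gh; apply/ffunP => i.
by have := eq_gh (s^-1 i)%g; rewrite !ffunE permKV.
Qed.

Lemma det_moment_hankel :
  \det moment_hankel = \sum_g moment_weight g * \det (node_vandermonde g).
Proof.
rewrite [LHS]/determinant.
under eq_bigr => s _.
  under eq_bigr => i _ do rewrite !mxE.
  rewrite bigA_distr_bigA big_distrr /=.
over.
rewrite exchange_big /=; apply: eq_bigr => g _.
rewrite -det_tr big_distrr /=; apply: eq_bigr => s _.
rewrite mulrCA -big_split /=; congr (_ * _); apply: eq_bigr => i _.
by rewrite !mxE exprD mulrA.
Qed.

Lemma det_node_vandermonde_perm s g :
  \det (node_vandermonde (ffun_perm s g)) = (-1) ^+ s * \det (node_vandermonde g).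
Proof.
have -> : node_vandermonde (ffun_perm s g) = col_perm s (node_vandermonde g).
  by apply/matrixP => i j; rewrite !mxE ffunE.
by rewrite col_permE det_mulmx det_perm odd_permV mulrC.
Qed.

Lemma det_node_vandermonde_real g : \det (node_vandermonde g) \is Num.real.
Proof.
rewrite det_Vandermonde; apply: rpred_prod => i _; apply: rpred_prod => j _.
by rewrite !mxE rpredB.
Qed.

Lemma alternating_moment_weight g :
  \sum_(s : 'S_n) (-1) ^+ s * moment_weight (ffun_perm s g)
    = \prod_i w (g i) * \det (node_vandermonde g).
Proof.
rewrite /determinant big_distrr /=; apply: eq_bigr => s _.
rewrite /moment_weight big_split /= mulrCA; congr (_ * (_ * _)).
  by rewrite [RHS](reindex_inj (@perm_inj _ s)); apply: eq_bigr => i _; rewrite ffunE.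
by apply: eq_bigr => i _; rewrite !mxE ffunE.
Qed.

Lemma det_moment_hankel_ge0 : 0 <= \det moment_hankel.
Proof.
have nfact_gt0 : (0 : R) < n`!%:R by rewrite ltr0n fact_gt0.
rewrite -(pmulr_rge0 _ nfact_gt0).
have -> : n`!%:R * \det moment_hankel = \sum_(s : 'S_n) \det moment_hankel.
  by rewrite sumr_const card_Sn mulr_natl.
under eq_bigr => s _.
  rewrite det_moment_hankel (reindex_inj (@ffun_perm_inj s)) /=.
  under eq_bigr => g _ do rewrite det_node_vandermonde_perm mulrCA mulrA.
over.
rewrite exchange_big /=; apply: sumr_ge0 => g _.
rewrite -big_distrl /= alternating_moment_weight -mulrA -expr2.
apply: mulr_ge0; first exact: prodr_ge0.
exact: real_exprn_even_ge0 (det_node_vandermonde_real g) _.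
Qed.
End MomentHankel.

Lemma det_hankel_power_sum_ge0 (C : numClosedFieldType) (T : finType) (x : T -> C)
    (m : nat) :
  (forall t, 0 <= x t) -> 0 <= \det (hankel (fun k => \sum_t x t ^+ k) m).
Proof.
move=> x_ge0.
have -> : hankel (fun k => \sum_t x t ^+ k) m = moment_hankel x x m.+1.
  by apply/matrixP => i j; rewrite !mxE; apply: eq_bigr => t _; rewrite addn1 exprS.
by apply: det_moment_hankel_ge0 => // t; apply: ger0_real.
Qed.

Theorem theorem2 (C : numClosedFieldType) (d : nat) (rho : 'M[C]_d)
    (a f : 'I_d -> 'cV[C]_d) :
  density_operator rho ->
  orthonormal_basis a -> orthonormal_basis f ->
  KD_positive rho a f ->
  forall m : nat, (0 < m)%N ->
  0 <= \det (hankel (KD_moment rho a f) m).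
Proof.
move=> _ _ _ KD_ge0 m _.
have -> : hankel (KD_moment rho a f) m
        = hankel (fun k => \sum_(lp : 'I_d * 'I_d) KD rho a f lp.1 lp.2 ^+ k) m.
  by apply/matrixP => i j; rewrite !mxE /KD_moment pair_bigA.
by apply: det_hankel_power_sum_ge0 => -[l p]; case: (KD_ge0 l p).
Qed.
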